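(* Let $D$ be a nonempty set and $\epsilon\subseteq D\times D$ a binary relation (write $\epsilon ab$ for $(a,b)\in\epsilon$) such that for all $a,b,c\in D$: $\epsilon ab\Rightarrow\epsilon aa$; $\epsilon ab\wedge\epsilon bc\Rightarrow\epsilon ac$; $\epsilon ab\wedge\epsilon bb\Rightarrow\epsilon ba$. Then $(D,\epsilon)$ satisfies, for all $a,b\in D$, $$\epsilon ab\iff\big(\exists x\in D\,(\epsilon xa\wedge\epsilon xb)\big)\wedge\big(\forall x,y\in D\,(\epsilon xa\wedge\epsilon ya\Rightarrow\epsilon xy)\big)$$ if and only if $D$ contains no singular name.
   Context: A model for $\mathbf{L_1}$ is a pair $(D,\epsilon)$ as in the hypothesis; it is a model for Leśniewski's ontology $\mathbf{L}$ if it satisfies the displayed equivalence (the axiom of $\mathbf{L}$) for all $a,b\in D$. An element $a\in D$ is an atom if $\epsilon aa$. An element $b\in D$ is a singular name if $b$ is not an atom (not $\epsilon bb$), there exists $a\in D$ with $\epsilon ab$, and for all $x,y\in D$, $\epsilon xb\wedge\epsilon yb$ implies $\epsilon xy$. *)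

Definition L1_model (D : Type) (eps : D -> D -> Prop) : Prop :=
  (forall a b : D, eps a b -> eps a a) /\
  (forall a b c : D, eps a b -> eps b c -> eps a c) /\
  (forall a b : D, eps a b -> eps b b -> eps b a).

Definition L_model (D : Type) (eps : D -> D -> Prop) : Prop :=
  forall a b : D,
    eps a b <->
    ((exists x : D, eps x a /\ eps x b) /\
     (forall x y : D, eps x a -> eps y a -> eps x y)).

Definition atom (D : Type) (eps : D -> D -> Prop) (a : D) : Prop := eps a a.

Definition singular_name (D : Type) (eps : D -> D -> Prop) (b : D) : Prop :=
  ~ eps b b /\
  (exists a : D, eps a b) /\
  (forall x y : D, eps x b -> eps y b -> eps x y).

From Stdlib Require Import Classical.

(* Write  RHS a b  for the right-hand side of the axiom of L: some x has
   eps x a and eps x b, and any two x, y with eps x a, eps y a satisfy eps x y.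
   - In every L_1 model, eps a b implies RHS a b (reflexivity on the left,
     then transitivity and symmetry through the atom a).
   - Conversely, given RHS a b, either a is an atom, and then transitivity
     through the witness x gives eps a b; or a is not an atom, and then a
     is a singular name by the very definition.
   - In a model of L, a name b with a member and uniqueness has RHS b b,
     hence eps b b, so it is never a singular name.
   Only the case split "atom or not" uses classical logic. *)

Section L1Models.

Variable D : Type.
Variable eps : D -> D -> Prop.

Definition L_rhs (a b : D) : Prop :=
  (exists x : D, eps x a /\ eps x b) /\
  (forall x y : D, eps x a -> eps y a -> eps x y).

(* In a model of L, a name with a member and at most one member (up to eps)
   is an atom; hence such a model has no singular name. *)
Lemma L_model_no_singular_name :
  L_model D eps -> ~ (exists b : D, singular_name D eps b).
Proof.
  intros HL [b [Hnot_atom [[a Hab] Huniq]]].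
  apply Hnot_atom, (proj2 (HL b b)).
  split; [exists a; split | ]; assumption.
Qed.

Hypothesis HL1 : L1_model D eps.

Lemma L1_eps_rhs (a b : D) : eps a b -> L_rhs a b.
Proof.
  destruct HL1 as [Hrefl [Htrans Hsym]]; intros Hab.
  assert (Haa : eps a a) by (apply (Hrefl a b); exact Hab).
  split.
  - exists a; split; assumption.
  - intros x y Hxa Hya.
    (* y is a member of the atom a, so a is a member of y. *)
    apply (Htrans x a y); [exact Hxa | apply Hsym; assumption].
Qed.

(* For an atom a, the right-hand side yields eps a b: the witness x has
   eps a x by uniqueness, and then eps x b. *)
Lemma L1_rhs_atom (a b : D) : eps a a -> L_rhs a b -> eps a b.
Proof.
  destruct HL1 as [_ [Htrans _]].
  intros Haa [[x [Hxa Hxb]] Huniq].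
  apply (Htrans a x b); [apply Huniq | ]; assumption.
Qed.

Lemma rhs_non_atom_singular (a b : D) :
  ~ eps a a -> L_rhs a b -> singular_name D eps a.
Proof.
  intros Hnot_atom [[x [Hxa _]] Huniq].
  split; [exact Hnot_atom | split; [exists x; exact Hxa | exact Huniq]].
Qed.

Lemma L1_no_singular_name_L_model :
  ~ (exists b : D, singular_name D eps b) -> L_model D eps.
Proof.
  intros Hno_sing a b; split.
  - exact (L1_eps_rhs a b).
  - intros Hrhs.
    destruct (classic (eps a a)) as [Haa | Hnot_atom].
    + exact (L1_rhs_atom a b Haa Hrhs).
    + exfalso; apply Hno_sing.
      exists a; exact (rhs_non_atom_singular a b Hnot_atom Hrhs).
Qed.

End L1Models.

Theorem theorem5p2 (D : Type) (eps : D -> D -> Prop)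
  (HD : inhabited D) (H1 : L1_model D eps) :
  L_model D eps <-> ~ (exists b : D, singular_name D eps b).
Proof.
  split.
  - exact (L_model_no_singular_name D eps).
  - exact (L1_no_singular_name_L_model D eps H1).
Qed.
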